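(* Let $\mathbb{F}_q$ be a finite field, let $(\star)$ be an arbitrary (not necessarily balanced) linear system over $\mathbb{F}_q$ with coefficient matrix $A\in\mathbb{F}_q^{m\times k}$, and let $b_1,\dots,b_l\in\mathbb{F}_q\setminus\{0\}$ with $b_1+\dots+b_l=0$. Then there are constants $\beta,\gamma\ge1$ with $\gamma<q$ such that, for every $n$ and every subset $S\subseteq\mathbb{F}_q^n$ with $|S|\ge\beta\gamma^n$, there is a linearly generic solution $(y_1,\dots,y_k)$ of $(\star)$ with all $y_j$ in the set $\big(b_1\cdot S\,\dot+_{\mathrm{aff}}\cdots\dot+_{\mathrm{aff}}\,b_l\cdot S\big)\cup\{0\}$.
   Context: For $S_1,\dots,S_l\subseteq\mathbb{F}_q^n$, the affinely independent restricted sumset is $S_1\dot+_{\mathrm{aff}}\cdots\dot+_{\mathrm{aff}}S_l:=\{x_1+\cdots+x_l: x_1\in S_1,\dots,x_l\in S_l \text{ affinely independent}\}$, and $b\cdot S=\{bx:x\in S\}$. A solution of $(\star)$ is a tuple $(y_1,\dots,y_k)\in(\mathbb{F}_q^n)^k$ with $\sum_j a_{ij}y_j=0$ for all $i\in[m]$. It is linearly generic if every linear equation $c_1y_1+\dots+c_ky_k=0$ ($c\in\mathbb{F}_q^k$) that it satisfies has $c$ in the row space of $A$. *)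

From HB Require Import structures.
From mathcomp Require Import all_boot all_order all_algebra.
From mathcomp Require Import reals.
Set Implicit Arguments. Unset Strict Implicit. Unset Printing Implicit Defensive.
Import Order.TTheory GRing.Theory Num.Theory.
Local Open Scope ring_scope.

Definition scale_set (F : finFieldType) (n : nat) (b : F) (S : {set 'rV[F]_n})
  : {set 'rV[F]_n} := [set b *: x | x in S].

Definition affinely_independent (F : finFieldType) (n l : nat)
  (x : 'I_l -> 'rV[F]_n) : Prop :=
  forall c : 'I_l -> F, \sum_i c i = 0 -> \sum_i c i *: x i = 0 ->
    forall i, c i = 0.

Definition in_aff_sumset (F : finFieldType) (n l : nat)
  (Ss : 'I_l -> {set 'rV[F]_n}) (v : 'rV[F]_n) : Prop :=
  exists x : 'I_l -> 'rV[F]_n,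
    (forall i, x i \in Ss i) /\ affinely_independent x /\ v = \sum_i x i.

(* A tuple (y_1,...,y_k) is encoded as the k x n matrix Y whose j-th row is y_j.
   It solves (star) iff sum_j a_ij y_j = 0 for all i, i.e. A *m Y = 0. *)
Definition is_solution (F : finFieldType) (m k n : nat)
  (A : 'M[F]_(m, k)) (Y : 'M[F]_(k, n)) : Prop := A *m Y = 0.

Definition linearly_generic (F : finFieldType) (m k n : nat)
  (A : 'M[F]_(m, k)) (Y : 'M[F]_(k, n)) : Prop :=
  forall c : 'rV[F]_k, c *m Y = 0 -> (c <= A)%MS.

From mathcomp Require Import all_boot all_order all_algebra.
From mathcomp Require Import reals unstable ring lra.
Set Implicit Arguments. Unset Strict Implicit. Unset Printing Implicit Defensive.
Import Order.TTheory GRing.Theory Num.Theory.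

(* Write G = 'I_k * 'I_l.  A Cauchy-Schwarz count shows that if a family P of
   functions X : F_q^k -> F_q^n has density d, and mu : F_q^k -> F_q takes the
   value 1 somewhere, then for some vector w outside a prescribed set of density
   at most d/2 the functions X with X and X + mu w both in P have density at least
   d^2/2.  Iterating this once for each g in G, starting from all functions into S
   and always avoiding the span of the vectors u_g already chosen, yields linearly
   independent u_g and, when S is dense enough, functions X with
   X(c) + sum_(g in E) c_(g.1) u_g in S for every c and every E included in G; a
   final count picks one such X with X(c) outside the span of the block sums
   v_i(c) = sum_(g.2 = i) c_(g.1) u_g for every c <> 0.  The points b_i (X(c) + v_i(c))
   of b_i S are then independent and, as sum_i b_i = 0, add up to c Z for the
   matrix Z with rows sum_(g.1 = t) b_(g.2) u_g.  So c |-> c Z is an injective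
   linear map into the restricted sumset, and (cokermx A) Z is a linearly
   generic solution. *)

Lemma sqr_sum_leq_card_sum_sqr (T : finType) (A : {pred T}) (f : T -> nat) :
  ((\sum_(i in A) f i) ^ 2 <= #|A| * \sum_(i in A) f i ^ 2)%N.
Proof.
have -> : (\sum_(i in A) f i) ^ 2 = \sum_(i in A) \sum_(j in A) f i * f j.
  by rewrite expnS expn1 big_distrl; apply: eq_bigr => i _; rewrite big_distrr.
rewrite -(leq_pmul2l (isT : 0 < 2)) big_distrr /=.
apply: (@leq_trans (\sum_(i in A) \sum_(j in A) (f i ^ 2 + f j ^ 2))).
  apply: leq_sum => i _; rewrite big_distrr /=.
  by apply: leq_sum => j _; exact: (nat_Cauchy _ _).1.
rewrite (eq_bigr (fun i => #|A| * f i ^ 2 + \sum_(j in A) f j ^ 2)); last first.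
  by move=> i _; rewrite big_split /= sum_nat_const.
by rewrite big_split /= sum_nat_const -big_distrr /= mul2n -addnn.
Qed.

Local Open Scope ring_scope.

Section PopularShift.

Variables (F : finFieldType) (I : finType) (n : nat) (m : I -> F) (c0 : I).
Hypothesis m_c0 : m c0 = 1.

Local Notation V := 'rV[F]_n.
Local Notation family := {ffun I -> V}.

Definition shift_family (w : V) (X : family) : family := [ffun c => X c + m c *: w].

(* The element of the orbit [{shift_family w X | w}] that vanishes at [c0]. *)
Definition shift_base (X : family) : family := [ffun c => X c - m c *: X c0].

Lemma shift_baseD w X : shift_base (shift_family w X) = shift_base X.
Proof.
by apply/ffunP => c; rewrite !ffunE m_c0 scale1r scalerDr opprD addrACA subrr addr0.
Qed.

Lemma shift_family_inj X : injective (shift_family^~ X).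
Proof.
move=> w1 w2 /(congr1 (fun Y : family => Y c0)).
by rewrite !ffunE m_c0 !scale1r => /addrI.
Qed.

Lemma shift_base_fiber X :
  [set Y | shift_base Y == shift_base X] = [set shift_family w X | w : V].
Proof.
apply/setP => Y; rewrite inE; apply/eqP/imsetP => [eqXY|[w _ ->]]; last first.
  exact: shift_baseD.
exists (Y c0 - X c0) => //; apply/ffunP => c; rewrite ffunE.
have := congr1 (fun Z : family => Z c) eqXY; rewrite !ffunE => /eqP.
by rewrite subr_eq => /eqP ->; rewrite scalerBr addrA addrAC.
Qed.

Lemma card_shift_base_image (P : {set family}) :
  (#|shift_base @: P| * #|{: V}| <= #|{: family}|)%N.
Proof.
pose glue (p : family * V) : family := [ffun c => p.1 c + m c *: p.2].
rewrite -[#|{: V}|]cardsT -cardsX -(@card_in_imset _ _ glue).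
  exact: max_card.
have base0 y : y \in shift_base @: P -> y c0 = 0.
  by case/imsetP=> X _ ->; rewrite ffunE m_c0 scale1r subrr.
move=> [y1 v1] [y2 v2]; rewrite !inE /= => /andP[/base0 y10 _] /andP[/base0 y20 _] e.
have ev : v1 = v2.
  have := congr1 (fun Z : family => Z c0) e.
  by rewrite !ffunE /= y10 y20 m_c0 !add0r !scale1r.
subst v2; congr pair; apply/ffunP => c.
by have := congr1 (fun Z : family => Z c) e; rewrite !ffunE /= => /addIr.
Qed.

Local Notation fiber P y := [set X in P | shift_base X == y].
Local Notation shifts_in P w := [set X in P | shift_family w X \in P].

Lemma fiber_shift_base (P : {set family}) X :
  fiber P (shift_base X) = shift_family^~ X @: [set w | shift_family w X \in P].
Proof.
apply/setP => Y; rewrite inE; apply/andP/imsetP => [[YP eY]|[w]].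
  have : Y \in [set shift_family w X | w : V] by rewrite -shift_base_fiber inE.
  by case/imsetP => w _ eYw; exists w; rewrite // inE -eYw.
by rewrite inE => wP ->; rewrite shift_baseD.
Qed.

Lemma sum_card_shift (P : {set family}) :
  (\sum_w #|shifts_in P w| =
   \sum_(y in shift_base @: P) #|fiber P y| ^ 2)%N.
Proof.
have card_shifts X :
    (\sum_w (shift_family w X \in P : nat) = #|fiber P (shift_base X)|)%N.
  rewrite -big_mkcond sum1dep_card fiber_shift_base card_imset //.
  exact: shift_family_inj.
rewrite (eq_bigr (fun w => \sum_(X in P) (shift_family w X \in P : nat))); last first.
  by move=> w _; rewrite -sum1dep_card big_mkcondr.
rewrite exchange_big /= (eq_bigr _ (fun X _ => card_shifts X)).
rewrite (partition_big_imset shift_base) /=; apply: eq_bigr => y _.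
rewrite (eq_bigr (fun _ => #|fiber P y|)); last by move=> X /andP[_ /eqP ->].
rewrite (eq_bigl (fun X => X \in fiber P y)); last by move=> X; rewrite !inE.
by rewrite sum_nat_const mulnn.
Qed.

Lemma card_mul_leq_sum_card_shift (P : {set family}) :
  (#|P| ^ 2 * #|{: V}| <= #|{: family}| * \sum_w #|shifts_in P w|)%N.
Proof.
have sum_fiber : (\sum_(y in shift_base @: P) #|fiber P y| = #|P|)%N.
  rewrite -sum1_card [RHS](partition_big_imset shift_base) /=; apply: eq_bigr => y _.
  by rewrite -sum1_card; apply: eq_bigl => X; rewrite !inE.
rewrite sum_card_shift -sum_fiber.
apply: leq_trans (leq_mul (sqr_sum_leq_card_sum_sqr _ _) (leqnn _)) _.
by rewrite mulnAC leq_mul2r card_shift_base_image orbT.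
Qed.

Lemma exists_popular_shift (P : {set family}) (Bad : {set V}) :
  (#|Bad| < #|{: V}|)%N ->
  exists2 w, w \notin Bad &
    (#|P| ^ 2 * #|{: V}| <=
     #|{: family}| * (#|Bad| * #|P| + #|{: V}| * #|shifts_in P w|))%N.
Proof.
move=> small_Bad.
have [w0 w0_Bad] : exists w0, w0 \notin Bad.
  apply/existsP; rewrite -negb_forall; apply: contraTN small_Bad => /forallP allBad.
  by rewrite -leqNgt subset_leq_card //; apply/subsetP => w _; exact: allBad.
have [w w_Bad w_max] := @arg_maxnP _ w0 (fun w => w \notin Bad)
  (fun w => #|shifts_in P w|) w0_Bad.
exists w => //; apply: leq_trans (card_mul_leq_sum_card_shift P) _.
rewrite leq_mul2l (bigID (mem Bad)) /=; apply/orP; right; apply: leq_add.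
  rewrite -sum_nat_const; apply: leq_sum => v _.
  by apply: subset_leq_card; apply/subsetP => X; rewrite inE => /andP[].
apply: (@leq_trans (\sum_(v | v \notin Bad) #|shifts_in P w|)).
  by apply: leq_sum => v; exact: w_max.
rewrite (eq_bigl (mem (~: Bad))) => [|v]; last by rewrite !inE.
by rewrite sum_nat_const leq_mul2r max_card orbT.
Qed.

End PopularShift.

Lemma density_square_half (R : realFieldType) (Q N p p' b d : R) :
  0 < Q -> 0 < N -> 0 <= b ->
  p ^+ 2 * N <= Q * (b * p + N * p') -> Q * d <= p -> 2 * b <= d * N ->
  Q * (d ^+ 2 / 2) <= p'.
Proof.
move=> Q0 N0 b0 hp dp bd.
have d0 : 0 <= d by rewrite -(pmulr_lge0 _ N0); lra.
have Qd : 0 <= Q * d by exact: mulr_ge0 (ltW Q0) d0.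
have p0 : 0 <= p := le_trans Qd dp.
suff : Q * N * (Q * (d ^+ 2 / 2)) <= Q * N * p' by rewrite ler_pM2l ?mulr_gt0.
have bp : Q * (2 * b) * p <= Q * (d * N) * p.
  by rewrite ler_wpM2r // ler_wpM2l // ltW.
have : 0 <= (p - Q * d) * (p + Q * d / 2) * N.
  by rewrite !mulr_ge0 ?(ltW N0) //; lra.
rewrite expr2 in hp *; nra.
Qed.

Section SpanSet.

Variables (F : finFieldType) (n : nat) (J : finType).

Definition span_set (r : seq J) (v : J -> 'rV[F]_n) : {set 'rV[F]_n} :=
  [set \sum_(j <- r) lam j *: v j | lam : {ffun J -> F}].

Lemma card_span_set r v : (#|span_set r v| <= #|F| ^ #|J|)%N.
Proof. by rewrite -card_ffun; exact: leq_imset_card. Qed.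

Lemma mem_span_set_of_relation r v (a : F) (w : 'rV[F]_n) (lam : J -> F) :
  a != 0 -> a *: w + \sum_(j <- r) lam j *: v j = 0 -> w \in span_set r v.
Proof.
move=> a0 /eqP; rewrite addr_eq0 => /eqP aw.
apply/imsetP; exists [ffun j => - a^-1 * lam j] => //.
under eq_bigr do rewrite ffunE -scalerA.
by rewrite -scaler_sumr scaleNr -scalerN -aw scalerA mulVf ?scale1r.
Qed.

End SpanSet.

Lemma exists_dense_shift (R : realFieldType) (F : finFieldType) (I : finType) (n : nat)
    (m : I -> F) (c0 : I) (P : {set {ffun I -> 'rV[F]_n}}) (Bad : {set 'rV[F]_n})
    (d : R) :
  m c0 = 1 -> #|{: {ffun I -> 'rV[F]_n}}|%:R * d <= #|P|%:R ->
  2 * #|Bad|%:R <= d * #|{: 'rV[F]_n}|%:R ->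
  exists2 w, w \notin Bad &
    #|{: {ffun I -> 'rV[F]_n}}|%:R * (d ^+ 2 / 2) <=
    #|[set X in P | shift_family m w X \in P]|%:R.
Proof.
set Qr := #|{: {ffun I -> 'rV[F]_n}}|%:R; set Nr := #|{: 'rV[F]_n}|%:R.
move=> m_c0 dP Bad_d.
have Q0 : 0 < Qr by rewrite ltr0n; apply/card_gt0P; exists [ffun=> 0].
have N0 : 0 < Nr by rewrite ltr0n; apply/card_gt0P; exists 0.
have d1 : d <= 1.
  rewrite -(ler_pM2l Q0) mulr1; apply: le_trans dP _.
  by rewrite ler_nat max_card.
have small_Bad : (#|Bad| < #|{: 'rV[F]_n}|)%N.
  have : d * Nr <= Nr := ler_piMl (ltW N0) d1.
  have : 0 <= #|Bad|%:R :> R by [].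
  by rewrite -(ltr_nat R) -/Nr; lra.
have [w w_Bad popular] := exists_popular_shift m_c0 P small_Bad.
exists w => //; apply: density_square_half Q0 N0 _ _ dP Bad_d => //.
by rewrite -natrX -!natrM -natrD -natrM ler_nat.
Qed.

Section CubeDensity.

Variable R : realFieldType.

Definition cube_density (x : R) (r : nat) : R := 2 * (x / 2) ^+ (2 ^ r).

Lemma cube_density0 x : cube_density x 0 = x.
Proof. by rewrite /cube_density expr1 mulrC divfK ?pnatr_eq0. Qed.

Lemma cube_densityS x r : cube_density x r.+1 = cube_density x r ^+ 2 / 2.
Proof. by rewrite /cube_density expnSr exprM; field. Qed.

Lemma cube_densityS_le x r : 0 <= x <= 2 ->
  cube_density x r.+1 <= cube_density x r.
Proof.
move=> /andP[x0 x2]; rewrite /cube_density expnSr exprM ler_pM2l //.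
have y0 : 0 <= (x / 2) ^+ (2 ^ r) by rewrite exprn_ge0 ?divr_ge0.
have y1 : (x / 2) ^+ (2 ^ r) <= 1 by rewrite exprn_ile1 ?divr_ge0 // ler_pdivrMr; lra.
by rewrite expr2 ler_piMl.
Qed.

End CubeDensity.

Section Cube.

Variables (R : realFieldType) (F : finFieldType) (I G : finType) (n : nat).
Variables (mu : G -> I -> F) (c0 : G -> I).
Hypothesis mu_c0 : forall g, mu g (c0 g) = 1.
Variable S : {set 'rV[F]_n}.

Local Notation V := 'rV[F]_n.
Local Notation family := {ffun I -> V}.
Local Notation dens := ((#|S|%:R / #|{: V}|%:R : R) ^+ #|I|).

Lemma exists_cube (gs : seq G) : uniq gs ->
  2 * (#|F| ^ #|G|)%:R <= cube_density dens (size gs) * #|{: V}|%:R ->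
  exists (u : G -> V) (P : {set family}),
    [/\ #|{: family}|%:R * cube_density dens (size gs) <= #|P|%:R,
        forall X, X \in P -> forall (E : pred G) c,
          X c + \sum_(g <- gs | E g) mu g c *: u g \in S
      & forall lam : G -> F, \sum_(g <- gs) lam g *: u g = 0 ->
          {in gs, forall g, lam g = 0}].
Proof.
have N0 : 0 < #|{: V}|%:R :> R by rewrite ltr0n; apply/card_gt0P; exists 0.
have dens01 : 0 <= dens <= 1.
  by rewrite exprn_ge0 ?exprn_ile1 ?divr_ge0 // ler_pdivrMr // mul1r ler_nat max_card.
elim: gs => [_ _|g gs IH /= /andP[g_gs uniq_gs] dense].
  exists (fun=> 0), [set X | X \in ffun_on S]; split => //.
  - rewrite cube_density0 cardsE card_ffun_on card_ffun !natrX -exprMn.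
    by rewrite mulrC divfK ?lt0r_neq0.
  - by move=> X; rewrite inE => /ffun_onP X_S E c; rewrite big_nil addr0.
have dense' : 2 * (#|F| ^ #|G|)%:R <= cube_density dens (size gs) * #|{: V}|%:R.
  apply: le_trans dense _; apply: ler_wpM2r; [exact: ltW | apply: cube_densityS_le].
  by case/andP: dens01 => -> x1; lra.
have [u [P [dP cubeP indep]]] := IH uniq_gs dense'.
have Bad_d : 2 * #|span_set gs u|%:R <= cube_density dens (size gs) * #|{: V}|%:R.
  by apply: le_trans dense'; rewrite ler_pM2l // ler_nat card_span_set.
have [w w_Bad dP'] := exists_dense_shift (mu_c0 g) dP Bad_d.
pose u' h := if h == g then w else u h.
have sum_u' (a : G -> F) (E : pred G) :
    \sum_(h <- gs | E h) a h *: u' h = \sum_(h <- gs | E h) a h *: u h.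
  rewrite big_seq_cond [RHS]big_seq_cond; apply: eq_bigr => h /andP[h_gs _].
  by rewrite /u'; case: eqP h_gs => // ->; rewrite (negbTE g_gs).
exists u', [set X in P | shift_family (mu g) w X \in P]; split.
- by rewrite cube_densityS.
- move=> X; rewrite inE => /andP[XP shiftXP] E c; rewrite big_cons sum_u' /u' eqxx.
  case: (E g); last exact: cubeP.
  by rewrite addrA; have := cubeP _ shiftXP E c; rewrite ffunE.
- move=> lam; rewrite big_cons (sum_u' lam predT) /u' eqxx => rel.
  have lam_g : lam g = 0.
    by apply: contraNeq w_Bad => lam_g0; apply: mem_span_set_of_relation lam_g0 rel.
  move: rel; rewrite lam_g scale0r add0r => /indep lam0 h.
  by rewrite inE => /predU1P[-> //|]; exact: lam0.
Qed.

End Cube.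

Lemma card_ffun_coord_in (I aT : finType) (c : I) (A : {set aT}) :
  (#|[set X : {ffun I -> aT} | X c \in A]| * #|aT| <= #|{: {ffun I -> aT}}| * #|A|)%N.
Proof.
rewrite -[#|aT|]cardsT -[#|{: {ffun I -> aT}}|]cardsT -!cardsX.
pose swap (p : {ffun I -> aT} * aT) :=
  ([ffun c' => if c' == c then p.2 else p.1 c'], p.1 c).
rewrite -(@card_in_imset _ _ swap).
  apply: subset_leq_card; apply/subsetP => y /imsetP[[X a]].
  by rewrite !inE /= => /andP[Xc _] ->.
move=> [X1 a1] [X2 a2] _ _ [eX eXc].
have ea : a1 = a2.
  by have := congr1 (fun Y : {ffun I -> aT} => Y c) eX; rewrite !ffunE eqxx.
subst a2; congr pair; apply/ffunP => c'.
have := congr1 (fun Y : {ffun I -> aT} => Y c') eX; rewrite !ffunE.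
by case: eqP => [-> _|].
Qed.

Lemma exists_ffun_avoiding (I aT : finType) (P : {set {ffun I -> aT}})
    (A : I -> {set aT}) (p : pred I) :
  (\sum_(c | p c) #|A c| * #|{: {ffun I -> aT}}| < #|P| * #|aT|)%N ->
  exists2 X, X \in P & forall c, p c -> X c \notin A c.
Proof.
move=> small_A.
pose hit := \bigcup_(c | p c) [set X : {ffun I -> aT} | X c \in A c].
have [X XP X_hit] : exists2 X, X \in P & X \notin hit.
  apply/exists_inP; apply: contraTT small_A; rewrite negb_exists_in -leqNgt.
  move=> /forall_inP P_hit; apply: leq_trans (_ : #|hit| * #|aT| <= _)%N.
    by rewrite leq_mul2r subset_leq_card ?orbT //; apply/subsetP => X /P_hit /negPn.
  apply: leq_trans (leq_mul (card_big_setU _ _ _) (leqnn _)) _.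
  rewrite big_distrl /=; apply: leq_sum => c _.
  by rewrite [(#|A c| * _)%N]mulnC; exact: card_ffun_coord_in.
exists X => // c pc; apply: contra X_hit => XcA.
by apply/bigcupP; exists c; rewrite ?inE.
Qed.

Section AffineEmbedding.

Variables (F : finFieldType) (k l n : nat) (b : 'I_l -> F).
Hypotheses (l_gt0 : (0 < l)%N) (b_neq0 : forall i, b i != 0).
Hypothesis b_sum : \sum_i b i = 0.
Variable u : 'I_k * 'I_l -> 'rV[F]_n.
Hypothesis u_free : forall lam, \sum_g lam g *: u g = 0 -> forall g, lam g = 0.

Definition block_sum (c : 'rV[F]_k) (i : 'I_l) : 'rV[F]_n :=
  \sum_(g | g.2 == i) c 0 g.1 *: u g.

Definition affine_embedding : 'M[F]_(k, n) :=
  \matrix_(t < k) \sum_(g | g.1 == t) b g.2 *: u g.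

Lemma sum_block_sum (kap : 'I_l -> F) c :
  \sum_i kap i *: block_sum c i = \sum_g (kap g.2 * c 0 g.1) *: u g.
Proof.
rewrite [RHS](partition_big (fun g : 'I_k * 'I_l => g.2) predT) //=.
apply: eq_bigr => i _.
by rewrite scaler_sumr; apply: eq_bigr => g /eqP <-; rewrite scalerA.
Qed.

Lemma mul_affine_embedding (c : 'rV[F]_k) :
  c *m affine_embedding = \sum_i b i *: block_sum c i.
Proof.
rewrite sum_block_sum mulmx_sum_row.
rewrite [RHS](partition_big (fun g : 'I_k * 'I_l => g.1) predT) //=.
apply: eq_bigr => t _; rewrite rowK scaler_sumr; apply: eq_bigr => g /eqP <-.
by rewrite scalerA mulrC.
Qed.

Lemma affine_embedding_free (c : 'rV[F]_k) : c *m affine_embedding = 0 -> c = 0.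
Proof.
rewrite mul_affine_embedding sum_block_sum => /u_free bc0.
apply/rowP => t; rewrite mxE; have /eqP := bc0 (t, Ordinal l_gt0).
by rewrite mulf_eq0 (negbTE (b_neq0 _)) => /eqP.
Qed.

Lemma affine_embedding_in_aff_sumset (S : {set 'rV[F]_n}) (c : 'rV[F]_k) x :
  c != 0 -> (forall i, x + block_sum c i \in S) ->
  x \notin span_set (index_enum 'I_l) (block_sum c) ->
  in_aff_sumset (fun i => scale_set (b i) S) (c *m affine_embedding).
Proof.
move=> /rV0Pn[t ct] xS x_span.
exists (fun i => b i *: (x + block_sum c i)); split; [|split].
- by move=> i; apply: imset_f.
- move=> lam _ rel i; pose kap i := lam i * b i.
  have rel' : (\sum_i kap i) *: x + \sum_i kap i *: block_sum c i = 0.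
    rewrite -[RHS]rel scaler_suml -big_split /=; apply: eq_bigr => j _.
    by rewrite scalerA scalerDr.
  have kap_sum : \sum_i kap i = 0.
    by apply: contraNeq x_span => kap0; apply: mem_span_set_of_relation kap0 rel'.
  move: rel'; rewrite kap_sum scale0r add0r sum_block_sum => /u_free/(_ (t, i)) /=.
  by move/eqP; rewrite !mulf_eq0 (negbTE ct) (negbTE (b_neq0 i)) !orbF => /eqP.
- rewrite mul_affine_embedding; under [RHS]eq_bigr do rewrite scalerDr.
  by rewrite big_split /= -scaler_suml b_sum scale0r add0r.
Qed.

End AffineEmbedding.

Lemma bernoulli_ineq (R : realFieldType) (x : R) (K : nat) :
  0 <= x <= 1 -> 1 - K%:R * x <= (1 - x) ^+ K.
Proof.
move=> /andP[x0 x1]; elim: K => [|K IH]; first by rewrite mul0r subr0 expr0.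
have Kx2 : 0 <= K%:R * x ^+ 2 by rewrite mulr_ge0 ?sqr_ge0.
rewrite exprSr -natr1; apply: le_trans (ler_wpM2r _ IH); rewrite expr2 in Kx2; nra.
Qed.

Lemma le_density_power (R : realFieldType) (q s beta : R) (K n : nat) :
  2 <= q -> (0 < K)%N -> 1 <= beta -> 0 <= s ->
  beta * (q - q / (2 * K%:R)) ^+ n <= s * q ^+ n -> beta <= s ^+ K * q ^+ n.
Proof.
move=> q2 K0 beta1 s0 hS; have K1 : 1 <= K%:R :> R by rewrite ler1n.
pose e : R := 1 / (2 * K%:R).
have e01 : 0 <= e <= 1.
  apply/andP; split; first by apply: divr_ge0; lra.
  by rewrite ler_pdivrMr ?mul1r; lra.
have rK : 1 / 2 <= (1 - e) ^+ K.
  apply: le_trans (bernoulli_ineq K e01).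
  have -> : K%:R * e = 1 / 2 by rewrite /e; field; rewrite pnatr_eq0 -lt0n.
  lra.
have qn0 : 0 < q ^+ n by rewrite exprn_gt0 //; lra.
have qe : q - q / (2 * K%:R) = (1 - e) * q by rewrite /e mulrBl !mul1r mulrC.
have beta_e : beta * (1 - e) ^+ n <= s.
  by rewrite -(ler_pM2r qn0) -mulrA -exprMn -qe.
have e0 : 0 <= 1 - e by case/andP: e01 => _; lra.
have : beta * (1 / 2) ^+ n <= s ^+ K.
  apply: le_trans (lerXn2r _ _ _ beta_e);
    rewrite ?nnegrE ?mulr_ge0 ?exprn_ge0 //; try lra.
  rewrite [leRHS]exprMn -exprM mulnC exprM; apply: ler_pM.
  - lra.
  - by rewrite exprn_ge0 //; lra.
  - by rewrite ler_eXnr.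
  - by rewrite lerXn2r ?nnegrE //; lra.
move/(ler_wpM2r (ltW qn0)); apply: le_trans.
rewrite -mulrA -exprMn -[leLHS]mulr1 ler_wpM2l //; try lra.
by rewrite exprn_ege1 //; lra.
Qed.

(* [K = q ^ k * 2 ^ (k * l)] is the exponent that [exists_cube] puts on the
   density of [S] after its [k * l] halved squarings, started from the density
   of functions [F_q^k -> S]; [gamma ^ n] compensates for the loss. *)
Definition threshold_gamma (R : realFieldType) (q k l : nat) : R :=
  q%:R - q%:R / (2 * (q ^ k * 2 ^ (k * l))%:R).

Definition threshold_beta (R : realFieldType) (q k l : nat) : R :=
  (2 ^ 2 ^ (k * l) * q ^ (k * l + l + k))%:R.

Lemma threshold_beta_ge1 (R : realFieldType) (q k l : nat) :
  (0 < q)%N -> 1 <= threshold_beta R q k l.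
Proof. by move=> q0; rewrite ler1n muln_gt0 !expn_gt0 q0. Qed.

Lemma threshold_gamma_bounds (R : realFieldType) (q k l : nat) :
  (1 < q)%N -> 1 <= threshold_gamma R q k l < q%:R.
Proof.
move=> q1; have q2 : 2 <= q%:R :> R by rewrite ler_nat.
have K1 : 1 <= (q ^ k * 2 ^ (k * l))%:R :> R by rewrite ler1n muln_gt0 !expn_gt0 ltnW.
have qK0 : 0 < q%:R / (2 * (q ^ k * 2 ^ (k * l))%:R) :> R by apply: divr_gt0; lra.
have qK2 : q%:R / (2 * (q ^ k * 2 ^ (k * l))%:R) <= q%:R / 2 :> R.
  by rewrite ler_pdivrMr; [nra | lra].
by rewrite /threshold_gamma; apply/andP; split; lra.
Qed.

Lemma cube_density_threshold (R : realFieldType) (q k l n : nat) (sz : R) :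
  (1 < q)%N -> 0 <= sz ->
  threshold_beta R q k l * threshold_gamma R q k l ^+ n <= sz ->
  2 * (q ^ (k * l + l + k))%:R <=
    cube_density ((sz / (q ^ n)%:R) ^+ (q ^ k)) (k * l) * (q ^ n)%:R.
Proof.
move=> q1 sz0 dense.
have qn0 : 0 < (q ^ n)%:R :> R by rewrite ltr0n expn_gt0 ltnW.
have q2 : 2 <= q%:R :> R by rewrite ler_nat.
have K0 : (0 < q ^ k * 2 ^ (k * l))%N by rewrite muln_gt0 !expn_gt0 ltnW.
have dense' : threshold_beta R q k l * threshold_gamma R q k l ^+ n <=
    sz / (q ^ n)%:R * q%:R ^+ n by rewrite -natrX divfK ?lt0r_neq0.
have beta_le := le_density_power q2 K0 (threshold_beta_ge1 R k l (ltnW q1))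
  (divr_ge0 sz0 (ltW qn0)) dense'.
rewrite /cube_density expr_div_n -exprM -mulrA ler_pM2l //.
rewrite mulrAC ler_pdivlMr ?exprn_gt0 // mulrC natrX.
by move: beta_le; rewrite /threshold_beta natrM !natrX.
Qed.

Lemma exists_ffun_avoiding_block_spans (R : realFieldType) (F : finFieldType)
    (k l n : nat) (u : 'I_k * 'I_l -> 'rV[F]_n)
    (P : {set {ffun 'rV[F]_k -> 'rV[F]_n}}) (d : R) :
  #|{: {ffun 'rV[F]_k -> 'rV[F]_n}}|%:R * d <= #|P|%:R ->
  (#|F| ^ k * #|F| ^ l)%:R < d * #|{: 'rV[F]_n}|%:R ->
  exists2 X, X \in P &
    forall c, c != 0 -> X c \notin span_set (index_enum 'I_l) (block_sum u c).
Proof.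
set N : R := #|{: 'rV[F]_n}|%:R; set Q : R := #|{: {ffun 'rV[F]_k -> 'rV[F]_n}}|%:R.
move=> dP qkl; apply: exists_ffun_avoiding.
have N0 : 0 < N by rewrite ltr0n; apply/card_gt0P; exists 0.
have Q0 : 0 < Q by rewrite ltr0n; apply/card_gt0P; exists [ffun=> 0].
have spans_small : (\sum_(c : 'rV[F]_k | c != 0%R)
    #|span_set (index_enum 'I_l) (block_sum u c)| <= #|F| ^ k * #|F| ^ l)%N.
  apply: leq_trans (_ : \sum_(c : 'rV[F]_k) #|F| ^ l <= _)%N; last first.
    by rewrite sum_nat_const card_mx mul1n.
  rewrite [leqRHS](bigID (fun c => c != 0)) /=; apply: leq_trans (leq_addr _ _).
  by apply: leq_sum => c _; rewrite -[l in (_ ^ l)%N]card_ord card_span_set.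
rewrite -big_distrl /= -(ltr_nat R) !natrM -/Q -/N.
apply: le_lt_trans (ler_wpM2r (ltW Q0) (_ : _ <= (#|F| ^ k * #|F| ^ l)%:R)) _.
  by rewrite ler_nat; exact: spans_small.
apply: (lt_le_trans (y := Q * (d * N))); first by rewrite mulrC ltr_pM2l.
by rewrite mulrA; exact: (ler_wpM2r (ltW N0) dP).
Qed.

Lemma exists_cube_avoiding_spans (R : realFieldType) (F : finFieldType)
    (k l n : nat) (S : {set 'rV[F]_n}) :
  2 * (#|F| ^ (k * l + l + k))%:R <=
    cube_density ((#|S|%:R / #|{: 'rV[F]_n}|%:R) ^+ (#|F| ^ k)) (k * l) *
      #|{: 'rV[F]_n}|%:R :> R ->
  exists (u : 'I_k * 'I_l -> 'rV[F]_n) (X : {ffun 'rV[F]_k -> 'rV[F]_n}),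
    [/\ forall lam, \sum_g lam g *: u g = 0 -> forall g, lam g = 0,
        forall c i, X c + block_sum u c i \in S
      & forall c, c != 0 -> X c \notin span_set (index_enum 'I_l) (block_sum u c)].
Proof.
set N : R := #|{: 'rV[F]_n}|%:R; set d := cube_density _ _ => dense.
have q0 : (0 < #|F|)%N by apply/card_gt0P; exists 0.
have card_G : #|{: 'I_k * 'I_l}| = (k * l)%N by rewrite card_prod !card_ord.
have size_G : size (index_enum ('I_k * 'I_l)%type) = (k * l)%N.
  by rewrite -card_G cardT enumT /index_enum unlock.
pose mu (g : 'I_k * 'I_l) (c : 'rV[F]_k) := c 0 g.1.
have mu_c0 g : mu g (delta_mx 0 g.1) = 1 by rewrite /mu mxE !eqxx.
have dense_cube : 2 * (#|F| ^ #|{: 'I_k * 'I_l}|)%:R <=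
    cube_density ((#|S|%:R / N) ^+ #|{: 'rV[F]_k}|)
      (size (index_enum ('I_k * 'I_l)%type)) * N.
  rewrite size_G card_G card_mx mul1n; apply: le_trans dense.
  by rewrite ler_pM2l // ler_nat leq_pexp2l // -addnA leq_addr.
have [u [P [dP cubeP indep]]] := exists_cube mu_c0 (index_enum_uniq _) dense_cube.
rewrite size_G -/N card_mx mul1n -/d in dP.
have qkl : (#|F| ^ k * #|F| ^ l)%:R < d * N.
  apply: lt_le_trans dense; rewrite -natrM ltr_nat -expnD mul2n -addnn addnC -addnA.
  apply: leq_ltn_trans (leq_pexp2l q0 (leq_addl (k * l) _)) _.
  by rewrite -[X in (X < _)%N]addn0 ltn_add2l expn_gt0 q0.
have [X XP X_span] := exists_ffun_avoiding_block_spans u dP qkl.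
exists u, X; split => //.
- by move=> lam /indep lam0 g; rewrite lam0 ?mem_index_enum.
- by move=> c i; exact: cubeP X XP (fun g => g.2 == i) c.
Qed.

Lemma exists_affine_sumset_embedding (R : realFieldType) (F : finFieldType)
    (k l n : nat) (b : 'I_l -> F) (S : {set 'rV[F]_n}) :
  (0 < l)%N -> (forall i, b i != 0) -> \sum_i b i = 0 ->
  threshold_beta R #|F| k l * threshold_gamma R #|F| k l ^+ n <= #|S|%:R ->
  exists Z : 'M[F]_(k, n), (forall c : 'rV_k, c *m Z = 0 -> c = 0) /\
    forall c : 'rV_k, c != 0 ->
      in_aff_sumset (fun i => scale_set (b i) S) (c *m Z).
Proof.
move=> l_gt0 b_neq0 b_sum dense.
have q1 : (1 < #|F|)%N by apply/card_gt1P; exists 0, 1; rewrite eq_sym oner_neq0.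
have card_V : #|{: 'rV[F]_n}| = (#|F| ^ n)%N by rewrite card_mx mul1n.
have := cube_density_threshold q1 (ler0n _ _) dense; rewrite -card_V.
case/exists_cube_avoiding_spans => u [X [u_free X_S X_span]].
exists (affine_embedding b u); split; first exact: affine_embedding_free.
by move=> c c0; apply: affine_embedding_in_aff_sumset => //; exact: X_span.
Qed.

Unset Implicit Arguments. Set Strict Implicit.

Theorem corollaryD (R : realType) (F : finFieldType) (m k l : nat)
  (A : 'M[F]_(m, k)) (b : 'I_l -> F) :
  (0 < l)%N ->
  (forall i, b i != 0) ->
  \sum_i b i = 0 ->
  exists beta gamma : R,
    1 <= beta /\ 1 <= gamma /\ gamma < #|F|%:R /\
    forall (n : nat) (S : {set 'rV[F]_n}),
      beta * gamma ^+ n <= #|S|%:R ->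
      exists Y : 'M[F]_(k, n),
        is_solution A Y /\ linearly_generic A Y /\
        forall j : 'I_k,
          in_aff_sumset (fun i => scale_set (b i) S) (row j Y) \/ row j Y = 0.
Proof.
move=> l_gt0 b_neq0 b_sum.
have q1 : (1 < #|F|)%N by apply/card_gt1P; exists 0, 1; rewrite eq_sym oner_neq0.
have /andP[gamma1 gamma_q] := threshold_gamma_bounds R k l q1.
exists (threshold_beta R #|F| k l), (threshold_gamma R #|F| k l).
split; first exact: threshold_beta_ge1 (ltnW q1).
do 2!split => //.
move=> n S /(exists_affine_sumset_embedding l_gt0 b_neq0 b_sum)[Z [Z_free Z_aff]].
exists (cokermx A *m Z); split; [|split].
- by rewrite /is_solution mulmxA mulmx_coker mul0mx.
- by move=> c; rewrite mulmxA => /Z_free c0; rewrite submxE c0.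
- move=> j; rewrite row_mul; have [->|] := eqVneq (row j (cokermx A)) 0.
    by right; rewrite mul0mx.
  by left; exact: Z_aff.
Qed.
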